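(* Let $R$ be an associative ring with unity and let $\mathbf{K}=(K,\leq_p)$ be an AEC with $K$ a class of left $R$-modules. If the Galois types in $\mathbf{K}$ are pp-syntactic, then $\mathbf{K}$ is $\lambda$-stable for every $\lambda\geq\operatorname{LS}(\mathbf{K})$ such that $\lambda^{|R|+\aleph_0}=\lambda$.
   Context: $\leq_p$ is the pure submodule relation. An AEC $(K,\leq_p)$: $K$ closed under isomorphism and unions of $\leq_p$-chains, with Löwenheim–Skolem number $\operatorname{LS}(\mathbf{K})$. Galois types $\mathbf{gtp}(\bar b/A;N)$ (for $N\in K$, $A\subseteq N$, $\bar b$ a tuple of $N$) are classes of $(\bar b,A,N)$ under the transitive closure of: $(\bar b_1,A,N_1)\sim(\bar b_2,A,N_2)$ iff there are $N'\in K$ and pure embeddings $f_\ell:N_\ell\to N'$ fixing $A$ with $f_1(\bar b_1)=f_2(\bar b_2)$. For $\bar b\in N$ and $M\subseteq N$, $\mathrm{pp}(\bar b/M,N)$ is the set of pp-formulas (existentially quantified finite systems of linear equations) with parameters in $M$ satisfied by $\bar b$ in $N$. Galois types in $\mathbf{K}$ are pp-syntactic if for all $M,N_1,N_2\in K$ with $M\leq_p N_1,N_2$ and tuples $\bar b_1\in N_1$, $\bar b_2\in N_2$: $\mathbf{gtp}(\bar b_1/M;N_1)=\mathbf{gtp}(\bar b_2/M;N_2)$ iff $\mathrm{pp}(\bar b_1/M,N_1)=\mathrm{pp}(\bar b_2/M,N_2)$. $\mathbf{K}$ is $\lambda$-stable if $|\mathbf{gS}(M)|\leq\lambda$ for every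 $M\in K$ of size $\lambda$, where $\mathbf{gS}(M)$ is the set of Galois types of single elements over $M$ in pure extensions in $K$. *)

From HB Require Import structures.
From mathcomp Require Import all_boot all_algebra.
From Stdlib Require Import Relations.
Set Implicit Arguments. Unset Strict Implicit. Unset Printing Implicit Defensive.
Import GRing.Theory.
Local Open Scope ring_scope.

Section AECModules.
Variable R : pzRingType.

(** Positive primitive (pp) formulas in [n] free variables:
    exists y_1..y_m, /\_{i<k} sum_j A i j x_j + sum_l B i l y_l = 0. *)
Record ppf (n : nat) := PPF {
  pp_m : nat; pp_k : nat;
  pp_A : 'I_pp_k -> 'I_n -> R;
  pp_B : 'I_pp_k -> 'I_pp_m -> R }.

Arguments pp_m {n}. Arguments pp_k {n}. Arguments pp_A {n}. Arguments pp_B {n}.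

Definition pp_sat (M : lmodType R) n (phi : ppf n) (x : 'I_n -> M) : Prop :=
  exists y : 'I_(pp_m phi) -> M,
    forall i : 'I_(pp_k phi),
      \sum_(j < n) pp_A phi i j *: x j + \sum_(l < pp_m phi) pp_B phi i l *: y l = 0.

Definition pure_emb (M N : lmodType R) (f : M -> N) : Prop :=
  [/\ (forall x y, f (x + y) = f x + f y),
      (forall (r : R) x, f (r *: x) = r *: f x),
      injective f &
      (forall n (phi : ppf n) (x : 'I_n -> M), pp_sat phi (f \o x) -> pp_sat phi x)].

(** The AEC axioms specific to K (coherence, Tarski-Vaught chain axioms etc.
    hold automatically for <=_p); LS is handled through [LS_le]. *)
Definition iso_closed (K : lmodType R -> Prop) : Prop :=
  forall (M N : lmodType R) (f : M -> N) (g : N -> M),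
    K M -> (forall x y, f (x + y) = f x + f y) -> (forall (r : R) x, f (r *: x) = r *: f x) ->
    cancel f g -> cancel g f -> K N.

Definition chain_closed (K : lmodType R -> Prop) : Prop :=
  forall (I : Type) (le : I -> I -> Prop),
    inhabited I -> (forall i, le i i) -> (forall i j k, le i j -> le j k -> le i k) ->
    (forall i j, le i j -> le j i -> i = j) -> (forall i j, le i j \/ le j i) ->
  forall (M : I -> lmodType R) (f : forall i j, le i j -> M i -> M j),
    (forall i, K (M i)) -> (forall i j (h : le i j), pure_emb (f i j h)) ->
    (forall i (h : le i i) x, f i i h x = x) ->
    (forall i j k (hij : le i j) (hjk : le j k) (hik : le i k) x,
        f j k hjk (f i j hij x) = f i k hik x) ->
  forall (N : lmodType R) (g : forall i, M i -> N),
    (forall i x y, g i (x + y) = g i x + g i y) ->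
    (forall i (r : R) x, g i (r *: x) = r *: g i x) ->
    (forall i, injective (g i)) ->
    (forall i j (h : le i j) x, g j (f i j h x) = g i x) ->
    (forall y : N, exists i x, g i x = y) ->
    K N /\ (forall i, pure_emb (g i)).

Definition AEC_modules (K : lmodType R -> Prop) : Prop :=
  iso_closed K /\ chain_closed K.

(** [LS_le K L] : the cardinal |L| satisfies |L| >= LS(K), i.e. |L| is infinite
    and the downward Loewenheim-Skolem property holds with |L|. *)
Definition LS_le (K : lmodType R -> Prop) (L : Type) : Prop :=
  (exists e : nat -> L, injective e) /\
  forall (M : lmodType R) (A : M -> Prop), K M ->
    exists (N : lmodType R) (g : N -> M),
      [/\ K N, pure_emb g, (forall x, A x -> exists y, g y = x) &
          exists h : N -> ({x : M | A x} + L)%type, injective h].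

(** Galois types of n-tuples over a set A: triples (b, A, N), where A sits in N
    through an injective map. *)
Record gtriple (A : Type) (n : nat) := GTriple {
  gt_N : lmodType R; gt_inc : A -> gt_N; gt_b : 'I_n -> gt_N }.

Definition gvalid (K : lmodType R -> Prop) A n (t : gtriple A n) : Prop :=
  K (gt_N t) /\ injective (gt_inc t).

Definition gstep (K : lmodType R -> Prop) A n (t1 t2 : gtriple A n) : Prop :=
  gvalid K t1 /\ gvalid K t2 /\
  exists (N' : lmodType R) (f1 : gt_N t1 -> N') (f2 : gt_N t2 -> N'),
    [/\ K N', pure_emb f1, pure_emb f2,
        (forall a, f1 (gt_inc t1 a) = f2 (gt_inc t2 a)) &
        (forall j, f1 (gt_b t1 j) = f2 (gt_b t2 j))].

Definition gtp_eq (K : lmodType R -> Prop) A n (t1 t2 : gtriple A n) : Prop :=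
  clos_trans _ (@gstep K A n) t1 t2.

Definition tjoin (N : Type) n p (b : 'I_n -> N) (a : 'I_p -> N) : 'I_(n + p) -> N :=
  fun j => match split j with inl j1 => b j1 | inr j2 => a j2 end.

Definition pp_type_eq (M N1 N2 : lmodType R) (i1 : M -> N1) (i2 : M -> N2) n
    (b1 : 'I_n -> N1) (b2 : 'I_n -> N2) : Prop :=
  forall p (phi : ppf (n + p)) (a : 'I_p -> M),
    pp_sat phi (tjoin b1 (i1 \o a)) <-> pp_sat phi (tjoin b2 (i2 \o a)).

Definition pp_syntactic (K : lmodType R -> Prop) : Prop :=
  forall (M N1 N2 : lmodType R) (i1 : M -> N1) (i2 : M -> N2),
    K M -> K N1 -> K N2 -> pure_emb i1 -> pure_emb i2 ->
  forall n (b1 : 'I_n -> N1) (b2 : 'I_n -> N2),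
    gtp_eq K (GTriple i1 b1) (GTriple i2 b2) <-> pp_type_eq i1 i2 b1 b2.

(** |gS(M)| <= |L|: an assignment of elements of L to the representatives
    (b, M, N) with N in K, M <=_p N, which is injective on Galois types. *)
Definition gS_le (K : lmodType R -> Prop) (M : lmodType R) (L : Type) : Prop :=
  exists c : forall (N : lmodType R), (M -> N) -> N -> L,
    forall (N1 N2 : lmodType R) (i1 : M -> N1) (i2 : M -> N2) (b1 : N1) (b2 : N2),
      K N1 -> K N2 -> pure_emb i1 -> pure_emb i2 ->
      c N1 i1 b1 = c N2 i2 b2 ->
      gtp_eq K (GTriple i1 (fun _ : 'I_1 => b1)) (GTriple i2 (fun _ : 'I_1 => b2)).

(** lambda-stability, with lambda = |L|. *)
Definition stable_in (K : lmodType R -> Prop) (L : Type) : Prop :=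
  forall M : lmodType R, K M ->
    (exists (e : M -> L) (d : L -> M), cancel e d /\ cancel d e) ->
    gS_le K M L.

(** lambda^(|R| + aleph_0) = lambda, with lambda = |L|. *)
Definition card_pow_fixed (L : Type) : Prop :=
  exists (e : ((R + nat)%type -> L) -> L) (d : L -> ((R + nat)%type -> L)),
    cancel e d /\ cancel d e.

End AECModules.

(* By pp-syntacticity a Galois type over M is determined by its pp-type, so it
   suffices to count pp-types.  For a pp-formula phi(x, y), the tuples a of M
   with N |= phi(b, a) are either none or a coset of phi(0, M): the difference
   of two solutions satisfies phi(0, _) in N, hence in M by purity.  So the
   pp-type of b is fixed by choosing, for each of the |R| + aleph_0 formulas,
   "no solution" or one solution in M^<omega, and there are at most
   lambda^(|R| + aleph_0) = lambda such choices.  The bijection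
   L^(R + nat) ~ L is turned into injections L^nat -> L and
   L^(seq (R + nat)) -> L, and sequences over R + nat enumerate the formulas. *)

From mathcomp Require Import all_boot all_algebra.
From Stdlib Require Import FunctionalExtensionality ClassicalEpsilon.
Set Implicit Arguments. Unset Strict Implicit. Unset Printing Implicit Defensive.
Import GRing.Theory.
Local Open Scope ring_scope.

Section AdditiveMaps.
Variables (U V : zmodType) (f : U -> V).
Hypothesis fD : {morph f : x y / x + y}.

Lemma additive_map0 : f 0 = 0.
Proof. by apply: (addrI (f 0)); rewrite -fD !addr0. Qed.

Lemma additive_mapB x y : f (x - y) = f x - f y.
Proof. by apply: (addIr (f y)); rewrite -fD !subrK. Qed.

End AdditiveMaps.

Section PPSatisfaction.
Variable R : pzRingType.
Implicit Types (M N : lmodType R).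

Lemma eq_pp_sat M n (phi : ppf R n) (x y : 'I_n -> M) :
  x =1 y -> pp_sat phi x -> pp_sat phi y.
Proof. by move=> /functional_extensionality ->. Qed.

Lemma pp_satB M n (phi : ppf R n) (x y : 'I_n -> M) :
  pp_sat phi x -> pp_sat phi y -> pp_sat phi (fun t => x t - y t).
Proof.
move=> [w1 H1] [w2 H2]; exists (fun l => w1 l - w2 l) => i.
under eq_bigr do rewrite scalerBr; under [X in _ + X]eq_bigr do rewrite scalerBr.
by rewrite !sumrB addrACA -opprD H1 H2 subrr.
Qed.

Lemma pp_sat_map M N (f : M -> N) n (phi : ppf R n) (x : 'I_n -> M) :
  {morph f : u v / u + v} -> (forall r, {morph f : u / r *: u}) ->
  pp_sat phi x -> pp_sat phi (f \o x).
Proof.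
move=> fD fZ [w H]; exists (f \o w) => i.
have f0 := additive_map0 fD.
rewrite -[RHS]f0 -(H i) fD !(big_morph f fD f0).
by congr (_ + _); apply: eq_bigr => j _; rewrite fZ.
Qed.

(* The solutions in M of phi(b1, _) form a coset of the solutions of
   phi(0, _), by purity of i1; the latter are carried along by i2. *)
Lemma pp_sat_transfer M N1 N2 (i1 : M -> N1) (i2 : M -> N2) n p (phi : ppf R (n + p))
    (b1 : 'I_n -> N1) (b2 : 'I_n -> N2) (r a : 'I_p -> M) :
  pure_emb i1 -> {morph i2 : u v / u + v} -> (forall s, {morph i2 : u / s *: u}) ->
  pp_sat phi (tjoin b1 (i1 \o r)) -> pp_sat phi (tjoin b1 (i1 \o a)) ->
  pp_sat phi (tjoin b2 (i2 \o r)) -> pp_sat phi (tjoin b2 (i2 \o a)).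
Proof.
move=> [i1D _ _ i1_pure] i2D i2Z H1r H1a H2r.
have Hdiff : pp_sat phi (tjoin (fun=> 0) (fun j => r j - a j)).
  apply: i1_pure; apply: eq_pp_sat (pp_satB H1r H1a) => t.
  by rewrite /tjoin /=; case: split => j; rewrite ?subrr ?(additive_map0 i1D) ?(additive_mapB i1D).
apply: eq_pp_sat (pp_satB H2r (pp_sat_map i2D i2Z Hdiff)) => t.
rewrite /tjoin /=; case: split => j /=; first by rewrite (additive_map0 i2D) subr0.
by rewrite (additive_mapB i2D) opprB addrC subrK.
Qed.

End PPSatisfaction.

Section FunctionCodes.
Variables (X L : Type) (code : (X -> L) -> L) (l0 : L).
Hypothesis code_inj : injective code.

Definition code_partial (Y : Type) (proj : X -> option Y) (u : Y -> L) : L :=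
  code (fun x => if proj x is Some y then u y else l0).

Lemma code_partial_inj (Y : Type) (emb : Y -> X) (proj : X -> option Y) :
  pcancel emb proj -> injective (code_partial proj).
Proof.
move=> embK u1 u2 /code_inj Hu; apply: functional_extensionality => y.
by have := congr1 (fun u => u (emb y)) Hu; rewrite /= embK.
Qed.

Fixpoint code_tuples (n : nat) (F : seq X -> L) : L :=
  if n is n'.+1 then code (fun x => code_tuples n' (fun s => F (x :: s))) else F [::].

Lemma code_tuples_inj n (F1 F2 : seq X -> L) :
  code_tuples n F1 = code_tuples n F2 -> forall s, size s = n -> F1 s = F2 s.
Proof.
elim: n F1 F2 => [|n IHn] F1 F2 /=; first by move=> H [].
move=> /code_inj HF [//|x s] [Hs].
exact: (IHn _ _ (congr1 (fun G => G x) HF) s Hs).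
Qed.

Definition code_seq (proj : X -> option nat) (F : seq X -> L) : L :=
  code_partial proj (fun n => code_tuples n F).

Lemma code_seq_inj (emb : nat -> X) (proj : X -> option nat) :
  pcancel emb proj -> injective (code_seq proj).
Proof.
move=> embK F1 F2 /(code_partial_inj embK) HF.
apply: functional_extensionality => s.
exact: (code_tuples_inj (congr1 (fun u => u (size s)) HF)).
Qed.

End FunctionCodes.

Section FormulaDecoding.
Variable R : pzRingType.

(* The coefficient matrices [A] and [B] are stored as one list indexed by the
   enumeration of ['I_k * ('I_(1 + p) + 'I_m)]. *)
Definition ppf_of_seq (p m k : nat) (c : seq R) : ppf R (1 + p) :=
  @PPF R (1 + p) m k
    (fun i j => nth 0 c (enum_rank ((i, inl j) : 'I_k * ('I_(1 + p) + 'I_m))))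
    (fun i l => nth 0 c (enum_rank ((i, inr l) : 'I_k * ('I_(1 + p) + 'I_m)))).

Definition ppf_decode (s : seq (R + nat)) : {p : nat & ppf R (1 + p)} :=
  if s is [:: inr p, inr m, inr k & c]
  then existT _ p (ppf_of_seq p m k [seq if x is inl r then r else 0 | x <- c])
  else existT _ 0%N (ppf_of_seq 0 0 0 [::]).

Lemma ppf_decode_surj p (phi : ppf R (1 + p)) :
  exists s, ppf_decode s = existT _ p phi.
Proof.
case: phi => m k A B.
pose entry (x : 'I_k * ('I_(1 + p) + 'I_m)) :=
  match x.2 with inl j => A x.1 j | inr l => B x.1 l end.
pose c := [seq entry x | x <- enum {: 'I_k * ('I_(1 + p) + 'I_m)}].
have entryP x : nth 0 c (enum_rank x) = entry x.
  by rewrite (nth_map x) ?nth_enum_rank // -cardE ltn_ord.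
exists [:: inr p, inr m, inr k & [seq inl r | r <- c]].
have decodeK : [seq (if x is inl r then r else 0) | x : R + nat <- [seq inl r | r <- c]] = c.
  by elim: c {entryP} => //= r c ->.
rewrite /= decodeK; congr existT; congr PPF; apply: functional_extensionality => i;
  apply: functional_extensionality => j; exact: entryP.
Qed.
End FormulaDecoding.

Section PPTypeCodes.
Variables (R : pzRingType) (M : lmodType R) (L : Type) (eM : M -> L) (l0 l1 : L).
Hypotheses (eM_inj : injective eM) (l1_neq_l0 : l1 <> l0).
Implicit Types N : lmodType R.

Definition pp_holds N (i : M -> N) (b : N) (d : {p : nat & ppf R (1 + p)})
    (a : nat -> M) : Prop :=
  pp_sat (projT2 d) (tjoin (fun _ : 'I_1 => b) (fun j => i (a (val j)))).

(* [l0] everywhere codes an unrealised formula; otherwise [l1] is followed by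
   the parameters of some solution. *)
Definition solution_code N (i : M -> N) (b : N) d : nat -> L :=
  match excluded_middle_informative (exists a, pp_holds i b d a) with
  | left ex => let a := proj1_sig (constructive_indefinite_description _ ex) in
      fun n => if n is n'.+1 then eM (a n') else l1
  | right _ => fun=> l0
  end.

Lemma solution_code_transfer (N1 N2 : lmodType R) (i1 : M -> N1) (i2 : M -> N2) b1 b2 p
    (phi : ppf R (1 + p)) (a : 'I_p -> M) :
  pure_emb i1 -> pure_emb i2 ->
  solution_code i1 b1 (existT _ p phi) = solution_code i2 b2 (existT _ p phi) ->
  pp_sat phi (tjoin (fun=> b1) (i1 \o a)) -> pp_sat phi (tjoin (fun=> b2) (i2 \o a)).
Proof.
move=> pi1 [i2D i2Z _ _] + Ha; rewrite /solution_code.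
have ex1 : exists a', pp_holds i1 b1 (existT _ p phi) a'.
  exists (fun n => if insub n is Some j then a j else 0).
  by apply: eq_pp_sat Ha => t; rewrite /tjoin; case: split => //= j; rewrite valK.
case: excluded_middle_informative => [ex1'|/(_ ex1) //].
case: excluded_middle_informative => [ex2|_ /(congr1 (fun u => u 0%N)) //].
case: constructive_indefinite_description => r1 Hr1.
case: constructive_indefinite_description => r2 Hr2 /= Hcode.
have Er : r1 =1 r2 by move=> n; apply: eM_inj; exact: (congr1 (fun u => u n.+1) Hcode).
apply: (pp_sat_transfer (r := fun j => r1 (val j)) pi1 i2D i2Z Hr1 Ha).
by apply: eq_pp_sat Hr2 => t; rewrite /tjoin; case: split => //= j; rewrite Er.
Qed.

Definition pp_type_code N (i : M -> N) (b : N) : seq (R + nat) -> nat -> L :=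
  fun s => solution_code i b (ppf_decode s).

Lemma pp_type_code_inj (N1 N2 : lmodType R) (i1 : M -> N1) (i2 : M -> N2) b1 b2 :
  pure_emb i1 -> pure_emb i2 -> pp_type_code i1 b1 =1 pp_type_code i2 b2 ->
  pp_type_eq i1 i2 (fun _ : 'I_1 => b1) (fun _ => b2).
Proof.
move=> pi1 pi2 Hcode p phi a; have [s Hs] := ppf_decode_surj phi.
have := Hcode s; rewrite /pp_type_code Hs => Hsol.
split; [exact: solution_code_transfer Hsol | exact: solution_code_transfer (esym Hsol)].
Qed.

End PPTypeCodes.

Theorem theorem3p5 (R : pzRingType) (K : lmodType R -> Prop) :
  AEC_modules K -> pp_syntactic K ->
  forall L : Type, LS_le K L -> card_pow_fixed R L -> stable_in K L.
Proof.
move=> _ ppK L [[en en_inj] _] [E [D [ED _]]] M KM [eM [dM [eMK _]]].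
pose proj (x : R + nat) := if x is inr n then Some n else None.
have projK : pcancel inr proj by [].
have E_inj := can_inj ED.
have l1_neq_l0 : en 1%N <> en 0%N by move=> /en_inj.
exists (fun N i b => code_seq E (en 0%N) proj
  (fun s => code_partial E (en 0%N) proj (pp_type_code eM (en 0%N) (en 1%N) i b s))).
move=> N1 N2 i1 i2 b1 b2 KN1 KN2 pi1 pi2 /(code_seq_inj E_inj projK) Hcode.
apply/(ppK M N1 N2 i1 i2 KM KN1 KN2 pi1 pi2).
apply: (pp_type_code_inj (can_inj eMK) l1_neq_l0 pi1 pi2) => s.
apply: (code_partial_inj E_inj projK); exact: (congr1 (fun F => F s) Hcode).
Qed.
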